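(* For every integer $l\ge1$, let $\mathcal{I}_6(l)$ be the index coding instance on $[4l+1]$ with $A_{2i-1}=\{2j: j\in[2l]\setminus\{i\}\}\cup\{4l+1\}$ and $A_{2i}=\{2i-1\}$ for $i\in[2l]$, and $A_{4l+1}=\{2i-1: i\in[2l]\}$. Then $\beta_{\text{R}}(\mathcal{I}_6(l))=3l+\tfrac12$.
   Context: Recursive scheme for an instance with side-information sets $A_i\subseteq[m]\setminus\{i\}$: set $\beta_{\text{R}}(\{i\})=1$ for all $i\in[m]$, and for $M\subseteq[m]$ with $|M|\ge2$ define recursively $$\beta_{\text{R}}(M)=\min\max_{i\in M}\sum_{j\in[n]:\,M_j\not\subseteq A_i}\gamma_j\,\beta_{\text{R}}(M_j),$$ where the minimum is over finite families of nonempty proper subsets $M_1,\dots,M_n\subsetneq M$ and weights $\gamma_j\in[0,1]$ with $\sum_{j:\,i\in M_j}\gamma_j\ge1$ for every $i\in M$. Then $\beta_{\text{R}}(\mathcal{I})=\beta_{\text{R}}([m])$. *)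

From HB Require Import structures.
From mathcomp Require Import classical_sets reals.
From mathcomp Require Import all_boot all_order all_algebra.
Set Implicit Arguments. Unset Strict Implicit. Unset Printing Implicit Defensive.
Import Order.TTheory GRing.Theory Num.Theory.
Local Open Scope ring_scope.


(* An index coding instance on [m] (represented as 'I_m, 0-based) is given by
   side-information sets A i \subset [m] \ {i}. *)

Section Recursive.
Variables (R : realType) (m : nat) (A : 'I_m -> {set 'I_m}).

Definition valid_family (M : {set 'I_m}) (fam : seq ({set 'I_m} * R)) : Prop :=
  [/\ forall p, p \in fam -> (p.1 != set0) /\ (p.1 \proper M),
      forall p, p \in fam -> 0 <= p.2 <= 1 &
      forall i, i \in M -> 1 <= \sum_(p <- fam | i \in p.1) p.2].

Definition family_cost (beta : {set 'I_m} -> R) (M : {set 'I_m})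
    (fam : seq ({set 'I_m} * R)) : R :=
  \big[Num.max/0]_(i in M) \sum_(p <- fam | ~~ (p.1 \subset A i)) p.2 * beta p.1.

(* beta_R with fuel: level n.+1 uses level n on the (strictly smaller) proper
   subsets; singletons get 1. *)
Fixpoint betaR_fuel (n : nat) (M : {set 'I_m}) : R :=
  match n with
  | 0 => 1
  | n'.+1 =>
      if (#|M| <= 1)%N then 1
      else inf [set v | exists fam, valid_family M fam /\
                                   v = family_cost (betaR_fuel n') M fam]%classic
  end.

Definition betaR (M : {set 'I_m}) : R := betaR_fuel #|M| M.

Definition betaR_inst : R := betaR setT.
End Recursive.

(* Paper's relation on 1-based indices for I_6(l): q \in A_p. *)
Definition I6_rel (l p q : nat) : bool :=
  if (p == 4 * l + 1)%N then (odd q && (q <= 4 * l - 1))%N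
  else if odd p then ((~~ odd q) && (1 <= q <= 4 * l)%N && (q != p + 1)%N)
                     || (q == 4 * l + 1)%N
  else (q == p - 1)%N.

(* I_6(l) on 'I_(4l+1): element x : 'I_(4l+1) is paper element x+1. *)
Definition I6 (l : nat) : 'I_(4 * l + 1) -> {set 'I_(4 * l + 1)} :=
  fun x => [set y : 'I_(4 * l + 1) | I6_rel l (x + 1)%N (y + 1)%N].

(* Lower bound: by induction on |M|, betaR(M) >= lower M = max(1, potential M), where
   potential M = |M| if M consists of primary users and otherwise is the sum of the
   weights (1 for the paper's users 2i, 1/2 for the others); potential [m] = 3l + 1/2.
   For the inductive step pick two users x, y of M such that no nonempty subset of M is
   known to both and every subset of M known to one of them is good, i.e. has twice its
   weight at most its lower bound.  Averaging the costs of x and y then bounds the cost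
   of every family.
   Upper bound: cover [m] with weight 1 by {1,2,3,4,4l+1} and the blocks
   {4k+1,...,4k+4}, 1 <= k < l.  Every user knows a message of its own block, so each
   block has betaR <= 3, and {1,2,3,4,4l+1} has betaR <= 7/2 through its singletons and
   {1,4l+1}, {3,4l+1}, {2,4}, all with weight 1/2. *)

From mathcomp Require Import classical_sets reals.
From mathcomp Require Import all_boot all_order all_algebra.
From mathcomp Require Import ring lra zify.
Import Order.TTheory GRing.Theory Num.Theory.
Local Open Scope ring_scope.
Set Implicit Arguments. Unset Strict Implicit. Unset Printing Implicit Defensive.

Lemma sumr_filter_le (R : numDomainType) (I : eqType) (s : seq I) (P : pred I) (F : I -> R) :
  (forall x, x \in s -> 0 <= F x) -> \sum_(x <- s | P x) F x <= \sum_(x <- s) F x.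
Proof.
move=> F0; rewrite [X in _ <= X](bigID P) /= lerDl big_seq_cond.
by rewrite sumr_ge0 // => x /andP [/F0].
Qed.

Section RecursiveScheme.
Context {R : realType} {m : nat} {A : 'I_m -> {set 'I_m}}.
Local Notation fuel := (betaR_fuel R A).
Local Notation cost := (family_cost A).
Local Notation family := (seq ({set 'I_m} * R)).
Implicit Types (M N : {set 'I_m}) (fam : family) (beta : {set 'I_m} -> R).

Lemma betaR_fuel_small n M : (#|M| <= 1)%N -> fuel n M = 1.
Proof. by case: n => [|n] //= ->. Qed.

Lemma betaR_fuel_set1 n x : fuel n [set x] = 1.
Proof. by rewrite betaR_fuel_small ?cards1. Qed.

Lemma family_cost_ge0 beta M fam : 0 <= cost beta M fam.
Proof. by apply: bigmax_ge_id. Qed.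

Definition singleton_family M : family := [seq ([set x], 1) | x <- enum M].

Lemma singleton_family_valid M : (1 < #|M|)%N -> valid_family M (singleton_family M).
Proof.
move=> M2; split.
- move=> p /mapP [x]; rewrite mem_enum => xM -> /=.
  split; first by apply/set0Pn; exists x; rewrite set11.
  by rewrite properEcard sub1set xM cards1.
- by move=> p /mapP [x _ ->]; rewrite /= ler01 lexx.
- move=> i iM; rewrite big_map big_enum_cond /= (bigD1 i) /=; last by rewrite iM set11.
  by rewrite lerDl sumr_ge0 // => *; apply: ler01.
Qed.

Lemma betaR_fuel_le_cost n M fam : (1 < #|M|)%N -> valid_family M fam ->
  fuel n.+1 M <= cost (fuel n) M fam.
Proof.
move=> M2 vfam; rewrite /= leqNgt M2 /=; apply: ge_inf; last by exists fam.
by exists 0 => _ [? [_ ->]]; apply: family_cost_ge0.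
Qed.

Lemma le_betaR_fuel n M (b : R) : (1 < #|M|)%N ->
  (forall fam, valid_family M fam -> b <= cost (fuel n) M fam) -> b <= fuel n.+1 M.
Proof.
move=> M2 lb_b; rewrite /= leqNgt M2 /=; apply: lb_le_inf; last by move=> _ [fam [/lb_b ? ->]].
exists (cost (fuel n) M (singleton_family M)), (singleton_family M).
by split => //; apply: singleton_family_valid.
Qed.

Lemma betaR_fuel_ge0 n M : 0 <= fuel n M.
Proof.
case: n => [|n]; first exact: ler01.
have [M1|M2] := leqP #|M| 1; first by rewrite betaR_fuel_small.
by apply: le_betaR_fuel => // fam _; apply: family_cost_ge0.
Qed.

Lemma betaR_fuel_le_unknown n M (c : nat) : (1 < #|M|)%N ->
  (forall i, i \in M -> (#|M :\: A i| <= c)%N) -> fuel n.+1 M <= c%:R.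
Proof.
move=> M2 unknown_le; apply: le_trans (betaR_fuel_le_cost n M2 (singleton_family_valid M2)) _.
apply: bigmax_le => // i iM; rewrite big_map big_enum_cond /=.
under eq_bigr do rewrite betaR_fuel_set1 mul1r.
rewrite sumr_const ler_nat; apply: leq_trans (unknown_le i iM).
by apply: subset_leq_card; apply/subsetP => x; rewrite unfold_in /= sub1set !inE andbC.
Qed.

Lemma betaR_fuel_le_card n M : (1 < #|M|)%N -> fuel n.+1 M <= #|M|%:R.
Proof.
by move=> M2; apply: betaR_fuel_le_unknown => // i _; rewrite subset_leq_card ?subsetDl.
Qed.

Lemma betaR_fuel_pair n x y : x != y -> y \in A x -> x \in A y -> fuel n.+1 [set x; y] <= 1.
Proof.
move=> xy yAx xAy; apply: (@betaR_fuel_le_unknown _ _ 1) => [|i /set2P [] ->].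
- by rewrite cards2 xy.
- rewrite -(cards1 x) subset_leq_card //; apply/subsetP => z.
  by rewrite !inE => /andP [zA /orP [] // /eqP zy]; rewrite zy yAx in zA.
- rewrite -(cards1 y) subset_leq_card //; apply/subsetP => z.
  by rewrite !inE => /andP [zA /orP [/eqP zx|//]]; rewrite zx xAy in zA.
Qed.

Lemma valid_family_term_ge0 n M fam p : valid_family M fam -> p \in fam ->
  0 <= p.2 * fuel n p.1.
Proof. by case=> _ w01 _ /w01 /andP [w0 _]; rewrite mulr_ge0 ?betaR_fuel_ge0. Qed.

Lemma betaR_fuel_le_sum n M fam : (1 < #|M|)%N -> valid_family M fam ->
  fuel n.+1 M <= \sum_(p <- fam) p.2 * fuel n p.1.
Proof.
move=> M2 vfam; apply: le_trans (betaR_fuel_le_cost n M2 vfam) _.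
have term_ge0 := valid_family_term_ge0 n vfam.
apply: bigmax_le => [|i _]; last exact: sumr_filter_le.
by rewrite big_seq sumr_ge0.
Qed.

Lemma betaR_fuel_le_sum_known n M fam (c q : R) : (1 < #|M|)%N -> valid_family M fam ->
  (forall i, i \in M ->
     exists2 p, p \in fam & (p.1 \subset A i) && (q <= p.2 * fuel n p.1)) ->
  \sum_(p <- fam) p.2 * fuel n p.1 <= c + q -> fuel n.+1 M <= c.
Proof.
move=> M2 vfam known total_le.
have term_ge0 := valid_family_term_ge0 n vfam.
have unknown_le i : i \in M ->
    \sum_(p <- fam | ~~ (p.1 \subset A i)) p.2 * fuel n p.1 <= c.
  case/known => p0 p0fam /andP [p0A q_le].
  have : \sum_(p <- rem p0 fam | ~~ (p.1 \subset A i)) p.2 * fuel n p.1 <=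
         \sum_(p <- rem p0 fam) p.2 * fuel n p.1.
    by apply: sumr_filter_le => p /mem_rem /term_ge0.
  by move: total_le; rewrite !(big_rem p0 p0fam) p0A /=; lra.
apply: le_trans (betaR_fuel_le_cost n M2 vfam) _.
apply: bigmax_le => [|i]; last exact: unknown_le.
have [i iM] : exists i, i \in M by apply/set0Pn; rewrite -card_gt0; lia.
by apply: le_trans (unknown_le i iM); rewrite big_seq_cond sumr_ge0 // => p /andP [/term_ge0].
Qed.

Lemma le_betaR_fuel_ind (lb : {set 'I_m} -> R) :
  (forall M, #|M| = 1%N -> lb M <= 1) ->
  (forall beta M fam, (1 < #|M|)%N -> (forall N, N != set0 -> N \proper M -> lb N <= beta N) ->
     valid_family M fam -> lb M <= cost beta M fam) ->
  forall n M, M != set0 -> (#|M| <= n)%N -> lb M <= fuel n M.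
Proof.
move=> lb1 lb_step; elim=> [|n IHn] M; rewrite -card_gt0 => M0 Mn; first by lia.
have [M1|M2] := leqP #|M| 1; first by rewrite betaR_fuel_small // lb1 //; lia.
apply: le_betaR_fuel => // fam; apply: lb_step => // N N0 NM.
by apply: IHn => //; have := proper_card NM; lia.
Qed.

(* Averaging the costs of the users x and y and exchanging the sums over the
   family and over M is weak LP duality for the covering constraints. *)
Lemma family_cost_ge_dual beta M fam x y (u : 'I_m -> R) :
  valid_family M fam -> x \in M -> y \in M -> (forall k, 0 <= u k) ->
  (forall N, N != set0 -> N \proper M ->
     2 * \sum_(k in N) u k <= beta N * ((~~ (N \subset A x))%:R + (~~ (N \subset A y))%:R)) ->
  \sum_(k in M) u k <= cost beta M fam.
Proof.
move=> [fam_sub w01 cover] xM yM u0 dual.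
pose c i := \sum_(p <- fam | ~~ (p.1 \subset A i)) p.2 * beta p.1.
have cx : c x <= cost beta M fam by apply: (le_bigmax_cond _ c xM).
have cy : c y <= cost beta M fam by apply: (le_bigmax_cond _ c yM).
suff : 2 * \sum_(k in M) u k <= c x + c y by lra.
have -> : c x + c y = \sum_(p <- fam) p.2 * beta p.1 *
    ((~~ (p.1 \subset A x))%:R + (~~ (p.1 \subset A y))%:R).
  rewrite /c !(big_mkcond (fun p => ~~ _)) -big_split /=; apply: eq_bigr => p _.
  by case: (p.1 \subset A x); case: (p.1 \subset A y) => /=; ring.
have exchange : \sum_(p <- fam) p.2 * (2 * \sum_(k in p.1) u k) =
    2 * \sum_k u k * \sum_(p <- fam | k \in p.1) p.2.
  rewrite mulr_sumr; under eq_bigr => p _ do rewrite mulrCA mulr_sumr mulr_sumr big_mkcond.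
  rewrite exchange_big; apply: congr_big => // k _.
  rewrite [in RHS]big_mkcond !mulr_sumr; apply: eq_bigr => p _.
  by case: ifP => _; ring.
apply: le_trans (_ : \sum_(p <- fam) p.2 * (2 * \sum_(k in p.1) u k) <= _).
  rewrite exchange ler_wpM2l // [X in _ <= X](bigID (mem M)) /=.
  apply: le_trans (_ : \sum_(k in M) u k * \sum_(p <- fam | k \in p.1) p.2 <= _).
    by apply: ler_sum => k kM; rewrite -[X in X <= _]mulr1 ler_wpM2l ?cover.
  rewrite lerDl sumr_ge0 // => k _; rewrite mulr_ge0 // big_seq_cond sumr_ge0 //.
  by move=> p /andP [pfam _]; case/andP: (w01 p pfam).
rewrite big_seq_cond [X in _ <= X]big_seq_cond; apply: ler_sum => p /andP [pfam _].
have [p0 pM] := fam_sub p pfam; have /andP [w0 _] := w01 p pfam.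
by rewrite -mulrA ler_wpM2l ?dual.
Qed.

End RecursiveScheme.

Section I6Instance.
Variables (R : realType) (l : nat).
Hypothesis l_gt0 : (0 < l)%N.
Local Notation m := (4 * l + 1)%N.
Local Notation A := (@I6 l).
Local Notation fuel := (betaR_fuel R A).
Local Notation cost := (family_cost A).
Implicit Types (M N : {set 'I_m}) (x y a b : 'I_m).

Lemma hub_lt : (4 * l < m)%N. Proof. by rewrite addn1. Qed.
Definition hub : 'I_m := Ordinal hub_lt.

(* The paper's users 2i-1, 2i and 4l+1 are the ordinals 2i-2, 2i-1 and 4l;
   the primary users are the paper's users 2i-1. *)
Definition primary x := ~~ odd x && (x != hub).
Definition primaries := [set x | primary x].

Lemma mem_I6_hub x : (x \in A hub) = primary x.
Proof.
by have := ltn_ord x; rewrite !inE /I6_rel /primary -val_eqE /=; do 2?case: ifP; lia.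
Qed.

Lemma mem_I6_odd b x : odd b -> (x \in A b) = (x.+1 == b :> nat).
Proof. by have := ltn_ord x; have := ltn_ord b; rewrite !inE /I6_rel; do 2?case: ifP; lia. Qed.

Lemma mem_I6_primary a x : primary a ->
  (x \in A a) = (odd x && (x != a.+1 :> nat)) || (x == hub).
Proof.
have := ltn_ord x; have := ltn_ord a.
by rewrite !inE /I6_rel /primary -!val_eqE /=; do 2?case: ifP; lia.
Qed.

Lemma I6_irrefl x : x \notin A x.
Proof. by have := ltn_ord x; rewrite inE /I6_rel; do 2?case: ifP; lia. Qed.

Definition weight x : R := if odd x then 1 else 2^-1.
Definition potential N : R :=
  if N \subset primaries then #|N|%:R else \sum_(x in N) weight x.
Definition lower N : R := Num.max 1 (potential N).
Definition good N := (N \subset primaries) || (N \subset [set hub]).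

Lemma weight_ge0 x : 0 <= weight x.
Proof. by rewrite /weight; case: odd; rewrite ?invr_ge0 ?ler0n. Qed.

Lemma twice_sum_weight_even N : {in N, forall x, ~~ odd x} ->
  2 * \sum_(x in N) weight x = #|N|%:R.
Proof.
move=> evenN; rewrite (eq_bigr (fun _ => 2^-1)) => [|x /evenN /negbTE ex]; last first.
  by rewrite /weight ex.
by rewrite sumr_const mulrnAr mulfV ?pnatr_eq0.
Qed.

Lemma primary_even N : N \subset primaries -> {in N, forall x, ~~ odd x}.
Proof. by move=> /subsetP Nprim x /Nprim; rewrite inE => /andP []. Qed.

Lemma sum_weight_le_potential N : \sum_(x in N) weight x <= potential N.
Proof.
rewrite /potential; case: ifP => // /primary_even /twice_sum_weight_even.
have : 0 <= \sum_(x in N) weight x by apply: sumr_ge0 => x _; apply: weight_ge0.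
lra.
Qed.

Lemma twice_sum_weight_good N : good N -> 2 * \sum_(x in N) weight x <= lower N.
Proof.
rewrite /lower /potential => /orP [Nprim | Nhub].
  by rewrite Nprim twice_sum_weight_even ?le_max ?lexx ?orbT //; apply: primary_even.
rewrite twice_sum_weight_even => [|x /(subsetP Nhub)]; last by rewrite inE => /eqP -> /=; lia.
have := subset_leq_card Nhub; rewrite cards1 -(ler_nat R) => N1.
by rewrite le_max (le_trans N1).
Qed.

Lemma good_sub N N' : N \subset N' -> good N' -> good N.
Proof. by rewrite /good => NN' /orP [] /(subset_trans NN') ->; rewrite ?orbT. Qed.

Definition witnesses M x y :=
  [/\ x \in M, y \in M, M :&: A x :&: A y = set0, good (M :&: A x) & good (M :&: A y)].

Section LowerBoundStep.
Variables (beta : {set 'I_m} -> R) (M : {set 'I_m}) (fam : seq ({set 'I_m} * R)).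
Hypotheses (vfam : valid_family M fam)
  (lower_le : forall N, N != set0 -> N \proper M -> lower N <= beta N).

Lemma one_le_cost r : r \in M -> 1 <= cost beta M fam.
Proof.
move=> rM; pose u k : R := (k == r)%:R.
have sum_u N : \sum_(k in N) u k = (r \in N)%:R.
  case: (boolP (r \in N)) => rN.
    by rewrite (bigD1 r) //= /u eqxx big1 ?addr0 // => k /andP [_ /negbTE ->].
  by rewrite big1 // => k kN; rewrite /u; case: eqP kN rN => // -> ->.
suff : \sum_(k in M) u k <= cost beta M fam by rewrite sum_u rM.
apply: (family_cost_ge_dual vfam rM rM) => [k|N N0 NM]; first by rewrite ler0n.
have := lower_le N0 NM; rewrite ge_max sum_u => /andP [beta1 _].
case: (boolP (r \in N)) => rN /=; last by rewrite mulr0 mulr_ge0 ?addr_ge0 ?ler0n //; lra.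
have -> : ~~ (N \subset A r) by apply: contraNN (I6_irrefl r) => /subsetP; apply.
by rewrite /=; lra.
Qed.

Lemma card_le_cost r : r \in M -> M \subset primaries -> #|M|%:R <= cost beta M fam.
Proof.
move=> rM Mprim; suff : \sum_(k in M) (1 : R) <= cost beta M fam by rewrite sumr_const.
apply: (family_cost_ge_dual vfam rM rM) => [k|N N0 NM]; first exact: ler01.
have Nprim : N \subset primaries := subset_trans (proper_sub NM) Mprim.
have -> : ~~ (N \subset A r).
  have [k kN] := set0Pn _ N0; apply/negP => /subsetP /(_ k kN).
  have := subsetP Nprim k kN; rewrite inE mem_I6_primary; last by rewrite -inE (subsetP Mprim).
  by rewrite /primary -!val_eqE /=; lia.
have := lower_le N0 NM; rewrite ge_max /potential Nprim => /andP [_ Nle].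
by rewrite sumr_const /=; lra.
Qed.

Lemma sum_weight_le_cost x y : witnesses M x y -> \sum_(k in M) weight k <= cost beta M fam.
Proof.
case=> xM yM disj goodx goody; apply: (family_cost_ge_dual vfam xM yM weight_ge0) => N N0 NM.
have NsubM := proper_sub NM; have lowerN := lower_le N0 NM.
have := lowerN; rewrite ge_max => /andP [_ potN].
have := sum_weight_le_potential N => weightN.
have good_known z : N \subset A z -> good (M :&: A z) -> 2 * \sum_(k in N) weight k <= beta N.
  move=> NAz goodz; apply: le_trans lowerN.
  by apply/twice_sum_weight_good/(good_sub _ goodz); rewrite subsetI NsubM.
case: (boolP (N \subset A x)) => Nx; case: (boolP (N \subset A y)) => Ny /=.
- by move: N0; rewrite -subset0 -disj !subsetI NsubM Nx Ny.
- by rewrite add0r mulr1; apply: good_known goodx.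
- by rewrite addr0 mulr1; apply: good_known goody.
- by lra.
Qed.

End LowerBoundStep.

Lemma witnesses_self M x : x \in M -> M :&: A x = set0 -> witnesses M x x.
Proof. by move=> xM Mx; split; rewrite ?Mx ?set0I // /good sub0set. Qed.

Lemma witnesses_odd M b : b \in M -> odd b -> exists x y, witnesses M x y.
Proof.
move=> bM ob.
have good_odd b' : odd b' -> good (M :&: A b').
  move=> ob'; apply/orP; left; apply/subsetP => x; have := ltn_ord b'.
  by rewrite in_setI mem_I6_odd // inE /primary -val_eqE /=; lia.
case: (boolP [exists b' in M, odd b' && (b' != b)]) => [|/exists_inPn uniq_odd].
  case/exists_inP => b' b'M /andP [ob' b'b]; exists b, b'; split; rewrite ?good_odd //.
  by apply/setP => x; move: b'b; rewrite !in_setI !mem_I6_odd // inE -val_eqE /=; lia.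
case: (boolP [exists a in M, a.+1 == b :> nat]) => [|/exists_inPn no_pred]; last first.
  exists b, b; apply: witnesses_self => //.
  apply/setP => x; rewrite in_setI (mem_I6_odd _ ob) inE.
  by apply/negP => /andP [xM xb]; have := no_pred x xM; rewrite xb.
case/exists_inP => a aM /eqP ab.
have pa : primary a by have := ltn_ord b; rewrite /primary -val_eqE /=; lia.
exists b, a; split => //; [|exact: good_odd|].
  apply/setP => x; rewrite !in_setI (mem_I6_odd _ ob) in_set0.
  apply/negP => /andP [/andP [_ /eqP xb]].
  have -> : x = a by apply/val_inj/succn_inj; rewrite /= xb ab.
  by rewrite (negbTE (I6_irrefl a)).
apply/orP; right; apply/subsetP => x; rewrite in_setI mem_I6_primary // inE.
case/andP => xM /orP [/andP [ox xa] | //].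
move: (uniq_odd x xM); rewrite ox /= negbK => /eqP xb.
by move: xa; rewrite xb -ab eqxx.
Qed.

Lemma witnesses_even M : (1 < #|M|)%N -> ~~ (M \subset primaries) ->
  {in M, forall x, ~~ odd x} -> exists x y, witnesses M x y.
Proof.
move=> M2 /subsetPn [z zM zprim] Meven.
have hubM : hub \in M by move: zprim; rewrite inE /primary Meven //= negbK => /eqP <-.
have [a] : exists a, a \in M :\ hub.
  by apply/set0Pn; rewrite -card_gt0; move: M2; rewrite (cardsD1 hub M) hubM.
rewrite !inE => /andP [ahub aM]; have pa : primary a by rewrite /primary Meven.
exists a, hub; split => //.
- apply/setP => x; rewrite !in_setI mem_I6_primary // mem_I6_hub inE.
  case: (boolP (x \in M)) => //= xM; rewrite (negbTE (Meven x xM)) /=.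
  by case: eqP => // ->; rewrite /primary eqxx andbF.
- apply/orP; right; apply/subsetP => x; rewrite in_setI mem_I6_primary // !inE.
  by case/andP => xM; rewrite (negbTE (Meven x xM)).
- by apply/orP; left; apply/subsetP => x; rewrite in_setI mem_I6_hub inE => /andP [].
Qed.

Lemma exists_witnesses M : (1 < #|M|)%N -> ~~ (M \subset primaries) ->
  exists x y, witnesses M x y.
Proof.
move=> M2 Mnprim; case: (boolP [exists b in M, odd b]) => [|/exists_inPn Meven].
  by case/exists_inP => b bM ob; apply: witnesses_odd bM ob.
exact: witnesses_even.
Qed.

Lemma lower_le_cost beta M fam : (1 < #|M|)%N ->
  (forall N, N != set0 -> N \proper M -> lower N <= beta N) ->
  valid_family M fam -> lower M <= cost beta M fam.
Proof.
move=> M2 lower_le vfam.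
have [r rM] : exists r, r \in M by apply/set0Pn; rewrite -card_gt0; lia.
rewrite /lower ge_max (one_le_cost vfam lower_le rM) /potential /=.
case: ifP => [Mprim | /negbT Mnprim]; first exact: (card_le_cost vfam lower_le rM).
have [x [y wxy]] := exists_witnesses M2 Mnprim.
exact: (sum_weight_le_cost vfam lower_le wxy).
Qed.

Lemma lower_le_betaR_fuel n M : M != set0 -> (#|M| <= n)%N -> lower M <= fuel n M.
Proof.
apply: le_betaR_fuel_ind => [{}M /eqP/cards1P [x ->] |]; last exact: lower_le_cost.
rewrite /lower ge_max lexx /potential cards1; case: ifP => //= _.
by rewrite big_set1 /weight; case: odd => //; lra.
Qed.

Lemma potential_setT : potential [set: 'I_m] = (3 * l)%:R + 2^-1.
Proof.
rewrite /potential ifN; last by apply/subsetPn; exists hub; rewrite ?inE /primary ?eqxx ?andbF.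
have sum_range k :
    \sum_(0 <= i < 4 * k + 1) (if odd i then 1 else 2^-1 : R) = (3 * k)%:R + 2^-1.
  elim: k => [|k IH]; first by rewrite big_nat1 /=; lra.
  rewrite (_ : 4 * k.+1 + 1 = (4 * k + 1).+4)%N; last by lia.
  rewrite !big_nat_recr //= IH oddD oddM /= mulnS natrD.
  lra.
rewrite -sum_range big_mkord; apply: eq_bigl => x; exact: in_setT.
Qed.

Lemma betaR_fuel_primary_hub n a : primary a -> fuel n.+1 [set a; hub] <= 1.
Proof.
move=> pa; apply: betaR_fuel_pair; first by case/andP: pa.
  by rewrite mem_I6_primary // eqxx orbT.
by rewrite mem_I6_hub.
Qed.

(* [vtx j] is the ordinal with value [j] for [j < 4l + 1], and [hub] otherwise. *)
Definition vtx (j : nat) : 'I_m := insubd hub j.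
Definition block k : {set 'I_m} := [set vtx (4 * k + j)%N | j : 'I_4].
Definition hub_block k := hub |: block k.

Section Block.
Variable k : nat.
Hypothesis k_lt : (k < l)%N.
Local Notation v j := (vtx (4 * k + j)%N).

Lemma val_block_vtx j : (j < 4)%N -> v j = (4 * k + j)%N :> nat.
Proof. by move=> j4; rewrite val_insubd ifT //; lia. Qed.

Lemma block_vtx_eq j j' : (j < 4)%N -> (j' < 4)%N -> (v j == v j') = (j == j').
Proof. by move=> j4 j'4; rewrite -val_eqE /= !val_block_vtx //; lia. Qed.

Lemma block_vtx_neq_hub j : (j < 4)%N -> (v j == hub) = false.
Proof. by move=> j4; rewrite -val_eqE /= val_block_vtx //; lia. Qed.

Lemma mem_block x : (x \in block k) = (4 * k <= x < 4 * k + 4)%N.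
Proof.
apply/imsetP/idP => [[j _ ->] | xk]; first by have := ltn_ord j; rewrite val_block_vtx //; lia.
by exists (inord (x - 4 * k)) => //; apply: val_inj; rewrite /= val_block_vtx inordK //; lia.
Qed.

Lemma block_vtx_in j : (j < 4)%N -> v j \in block k.
Proof. by move=> j4; rewrite mem_block val_block_vtx //; lia. Qed.

Lemma card_block : #|block k| = 4%N.
Proof.
rewrite card_imset ?card_ord // => j j' /(congr1 val) /=.
by rewrite !val_block_vtx // => /addnI /val_inj.
Qed.

Lemma card_hub_block : #|hub_block k| = 5%N.
Proof. by rewrite cardsU1 card_block mem_block /=; lia. Qed.

Lemma block_known x : x \in block k -> exists2 j, (j < 4)%N & v j \in A x.
Proof.
case/imsetP => j _ ->; exists ((j + 3) %% 4)%N; first by rewrite ltn_mod.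
by have := ltn_ord j; rewrite inE /I6_rel !val_block_vtx ?ltn_mod //; do 2?case: ifP; lia.
Qed.

Lemma betaR_fuel_block n : fuel n.+1 (block k) <= 3%:R.
Proof.
apply: betaR_fuel_le_unknown => [|x /block_known [j j4 vjx]]; first by rewrite card_block.
have sub : block k :\: A x \subset block k :\ v j.
  apply/subsetP => y; rewrite in_setD in_setD1 => /andP [yx ->].
  by rewrite andbT; apply: contraNneq yx => ->.
apply: leq_trans (subset_leq_card sub) _.
by have := card_block; rewrite (cardsD1 (v j)) block_vtx_in // add1n => -[->].
Qed.

Lemma primary_block_vtx j : (j < 4)%N -> ~~ odd j -> primary (v j).
Proof. by move=> j4 ej; rewrite /primary block_vtx_neq_hub // val_block_vtx //; lia. Qed.

Definition hub_block_family : seq ({set 'I_m} * R) :=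
  [seq (N, 2^-1) | N <- [:: [set v 0]; [set v 1]; [set v 2]; [set v 3];
                            [set v 0; hub]; [set v 2; hub]; [set v 1; v 3]]].

Lemma hub_block_family_valid : valid_family (hub_block k) hub_block_family.
Proof.
have vin j : (j < 4)%N -> v j \in hub_block k by move=> j4; rewrite setU1r ?block_vtx_in.
split.
- move=> _ /mapP [N NS ->] /=.
  have /andP [Nsub /andP [N0 N2]] : (N \subset hub_block k) && (0 < #|N| <= 2)%N.
    move: N NS; apply/allP.
    by rewrite /= !subUset !sub1set !vin ?setU11 // !cards1 !cards2 !ltn0Sn !ltnS !leq_b1.
  split; first by rewrite -card_gt0.
  by rewrite properEcard Nsub card_hub_block (leq_ltn_trans N2).
- by move=> _ /mapP [N _ ->] /=; apply/andP; split; lra.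
- move=> i /setU1P [-> | /imsetP [j _ ->]]; rewrite big_map !big_cons big_nil !inE.
    by rewrite ![hub == _]eq_sym !block_vtx_neq_hub //= eqxx; lra.
  by case: j => [[|[|[|[|j]]]] //= _]; rewrite !block_vtx_eq // !block_vtx_neq_hub //=; lra.
Qed.

(* Each user of [hub_block k] knows the message of one of the four singletons, which
   saves 1/2 on the total weighted cost 4 of the family. *)
Lemma betaR_fuel_hub_block n : fuel n.+2 (hub_block k) <= 7 / 2.
Proof.
apply: (betaR_fuel_le_sum_known (q := 2^-1) _ hub_block_family_valid) => [|i iS|].
- by rewrite card_hub_block.
- have [j j4 vji] : exists2 j, (j < 4)%N & v j \in A i.
    case/setU1P: iS => [-> | /block_known //]; exists 0%N => //.
    by rewrite mem_I6_hub primary_block_vtx.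
  exists ([set v j], 2^-1); last by rewrite sub1set vji betaR_fuel_set1 mulr1 /=.
  by apply: map_f; case: j j4 {vji} => [|[|[|[|j]]]] //= _; rewrite !inE eqxx ?orbT.
- have f0 : fuel n.+1 [set v 0; hub] <= 1 by apply/betaR_fuel_primary_hub/primary_block_vtx.
  have f2 : fuel n.+1 [set v 2; hub] <= 1 by apply/betaR_fuel_primary_hub/primary_block_vtx.
  have f13 : fuel n.+1 [set v 1; v 3] <= 2%:R.
    have card13 : #|[set v 1; v 3]| = 2%N by rewrite cards2 block_vtx_eq.
    by apply: le_trans (betaR_fuel_le_card n _) _; rewrite card13.
  rewrite big_map (eq_bigr (fun N => 2^-1 * fuel n.+1 N) (fun _ _ => erefl)).
  by rewrite !big_cons big_nil !betaR_fuel_set1; lra.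
Qed.
End Block.

Definition top_family : seq ({set 'I_m} * R) :=
  (hub_block 0, 1) :: [seq (block k, 1) | k <- index_iota 1 l].

Lemma top_family_valid : (1 < l)%N -> valid_family [set: 'I_m] top_family.
Proof.
move=> l2; split.
- move=> p; rewrite inE => /orP [/eqP -> /= | /mapP [k]].
    split; first by apply/set0Pn; exists hub; rewrite setU11.
    apply/properP; split; first exact: subsetT.
    exists (vtx (4 * 1 + 0)) => //; rewrite !inE block_vtx_neq_hub // mem_block //.
    by rewrite val_block_vtx.
  rewrite mem_iota subnKC // => /andP [k1 kl] -> /=.
  split; first by rewrite -card_gt0 card_block.
  apply/properP; split; first exact: subsetT.
  by exists hub; rewrite // mem_block //=; lia.
- by move=> p; rewrite inE => /orP [/eqP -> | /mapP [k _ ->]] /=; rewrite ler01 lexx.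
- move=> i _; rewrite big_cons; case: ifP => [_ | iS].
    by rewrite lerDl big_seq_cond sumr_ge0 // => p /andP [/mapP [k _ ->]].
  have /andP [k1 kl] : (0 < i %/ 4 < l)%N.
    by move: iS; have := ltn_ord i; rewrite !inE mem_block // -val_eqE /=; lia.
  rewrite big_map (big_rem (i %/ 4)%N) /=; last by rewrite mem_iota subnKC // k1.
  rewrite (mem_block kl) ifT; last by lia.
  by rewrite lerDl sumr_ge0.
Qed.

Lemma betaR_fuel_setT_le : fuel #|[set: 'I_m]| [set: 'I_m] <= (3 * l)%:R + 2^-1.
Proof.
have -> : #|[set: 'I_m]| = (4 * l).+1 by rewrite cardsT card_ord addn1.
have [l1 | l2] := leqP l 1.
  have -> : [set: 'I_m] = hub_block 0.
    by apply/eqP; rewrite eq_sym eqEcard subsetT card_hub_block // cardsT card_ord; lia.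
  have -> : (3 * l)%:R = 3 :> R by rewrite (_ : 3 * l = 3)%N //; lia.
  have := betaR_fuel_hub_block l_gt0 (4 * l - 1).
  by rewrite (_ : (4 * l - 1).+2 = (4 * l).+1)%N => [?|]; [lra | lia].
apply: le_trans (betaR_fuel_le_sum _ _ (top_family_valid l2)) _.
  by rewrite cardsT card_ord; lia.
rewrite big_cons big_map /= mul1r.
have := betaR_fuel_hub_block l_gt0 (4 * l - 2).
rewrite (_ : (4 * l - 2).+2 = 4 * l)%N; last by lia.
move=> hub_le; apply: le_trans (lerD hub_le (_ : _ <= \sum_(1 <= k < l) 3%:R)) _.
  apply: ler_sum_nat => k /andP [_ kl]; rewrite mul1r.
  by have := betaR_fuel_block kl (4 * l - 1); rewrite (_ : (4 * l - 1).+1 = 4 * l)%N //; lia.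
rewrite sumr_const_nat (_ : 3 * l = 3 * (l - 1) + 3)%N; last by lia.
by rewrite natrD natrM mulr_natr; lra.
Qed.

Lemma betaR_fuel_setT_ge : (3 * l)%:R + 2^-1 <= fuel #|[set: 'I_m]| [set: 'I_m].
Proof.
rewrite -potential_setT; apply: le_trans (lower_le_betaR_fuel _ (leqnn _)).
  by rewrite /lower le_max lexx orbT.
by apply/set0Pn; exists hub.
Qed.

End I6Instance.

Theorem proposition9 (R : realType) (l : nat) (hl : (1 <= l)%N) :
  @betaR_inst R (4 * l + 1)%N (@I6 l) = (3 * l)%:R + 2^-1.
Proof. by apply/eqP; rewrite eq_le betaR_fuel_setT_le // betaR_fuel_setT_ge. Qed.
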